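(* Let $C$ be an $n$-dimensional tree or dual tree and let $F_C:V_0(C)\to V_1(C)$ be a non-zero associated map of bidegree $(n,p)$ satisfying the naturality rule, the filtration rule and the duality rule. If $p=2n$, then $F_C$ agrees with the Sarkar–Seed–Szabo formula: for a tree with starting circles $x_1,\dots,x_{n+1}$ and ending circle $y$, $F_C(x_1\cdots x_{n+1})=y$ and $F_C$ vanishes on all other monomials; for a dual tree with starting circle $x$ and ending circles $y_1,\dots,y_{n+1}$, $F_C(1)=1\otimes\cdots\otimes1$ and $F_C(x)=0$. If $p>2n$, then $F_C$ must be zero (i.e. no such non-zero map exists).
   Context: An $n$-dimensional resolution configuration $C$ is a finite set of pairwise disjoint embedded circles in $S^2$ (the starting circles) together with $n$ pairwise disjoint embedded arcs whose endpoints lie on the circles and whose interiors are disjoint from the circles. The ending circles are obtained by surgery along all arcs. The dual configuration $C^*$ consists of the ending circles with dual arcs obtained by rotating each arc $90$ degrees counterclockwise; the mirror $m(C)$ is the reflection of $C$ in $\mathbb{R}\times\{0\}\subset\mathbb{R}^2\cup\{\infty\}=S^2$. $C$ is connected if the graph with vertices the circles and edges the arcs is connected. A connected $n$-dimensional configuration is a tree if it has exactly $n+1$ starting circles and one ending circle; a dual tree is the dual of a tree. $V_0(C)=\bigotimes_i\mathbb{F}_2[x_i]/(x_i^2)$ over starting circles $x_i$, $V_1(C)=\bigotimes_j\mathbb{F}_2[y_j]/(y_j^2)$ over ending circles $y_j$, with bases of monomials. Quantum grading: in each factor $\mathrm{gr}_q(1)=1$, $\mathrm{gr}_q(z)=-1$,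 summed over factors, and for an $n$-dimensional configuration monomials of $V_1(C)$ get an extra shift of $+n$. A linear map $F_C$ has bidegree $(n,p)$ if it sends each monomial to a combination of monomials with quantum grading larger by $p$. Rules: (Naturality) if an orientation-preserving diffeomorphism of $S^2$ sends $C$ to $C'$, then $F_C=F_{C'}$ under the induced identifications. (Duality) with canonical identifications $V_0(m(C^* ))=V_1(C)$, $V_1(m(C^* ))=V_0(C)$, and $a\mapsto a^*$ the map on monomials induced by $1^*=z$, $z^*=1$ in each factor, the coefficient of $b$ in $F_C(a)$ equals the coefficient of $a^*$ in $F_{m(C^* )}(b^* )$ for all monomials $a\in V_0(C)$, $b\in V_1(C)$. (Filtration) for a point $P$ on the starting circles, with $x(P)$, $y(P)$ the starting and ending circles containing $P$: if monomial $a$ is divisible by $x(P)$ and the coefficient of monomial $b$ in $F_C(a)$ is non-zero, then $y(P)$ divides $b$. *)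

From mathcomp Require Import all_boot all_fingroup all_algebra.
Set Implicit Arguments. Unset Strict Implicit. Unset Printing Implicit Defensive.
Import GRing.Theory.
Local Open Scope ring_scope.

(* Circles are indexed: starting circles x_i by 'I_k, ending circles y_j by 'I_l.
   A monomial of  F_2[x_1]/(x_1^2) ⊗ ... ⊗ F_2[x_k]/(x_k^2)  is the product of
   the x_i for i in a set  a : {set 'I_k}  (a = set0 is 1⊗...⊗1).  *)

(* A linear map V_0(C) -> V_1(C) is given by its matrix of coefficients in the
   monomial bases:  coef F a b = coefficient of monomial b in F(a). *)
Definition cmap (k l : nat) := {set 'I_k} -> {set 'I_l} -> 'F_2.

(* quantum grading of a monomial (each 1 contributes +1, each variable -1) *)
Definition grq (k : nat) (a : {set 'I_k}) : int := (k%:Z - (2 * #|a|)%:Z)%R.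

(* bidegree (n,p): monomials of V_1 get an extra shift +n *)
Definition has_bidegree (k l n : nat) (p : int) (F : cmap k l) : Prop :=
  forall (a : {set 'I_k}) (b : {set 'I_l}), F a b != 0 -> (grq b + n%:Z = grq a + p)%R.

Definition nonzero_map (k l : nat) (F : cmap k l) : Prop :=
  exists a b, F a b != 0.

(* For a tree or a dual tree, every starting circle x_i
   contains points P lying on each ending circle y_j (trees: the unique ending
   circle; dual trees: every ending circle contains a piece of the unique
   starting circle), so the rule for all points P reads as follows. *)
Definition filtration_rule (k l : nat) (F : cmap k l) : Prop :=
  forall (i : 'I_k) (j : 'I_l) (a : {set 'I_k}) (b : {set 'I_l}), i \in a -> F a b != 0 -> j \in b.

(* Duality rule between F = F_C and G = F_{m(C^* )}, with the canonical
   identifications V_0(m(C^* )) = V_1(C), V_1(m(C^* )) = V_0(C); the monomial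
   a^* is obtained by swapping 1 and the variable in each factor, i.e. it is
   the complement of a. *)
Definition duality_rule (k l : nat) (F : cmap k l) (G : cmap l k) : Prop :=
  forall (a : {set 'I_k}) (b : {set 'I_l}), F a b = G (~: b) (~: a).

(* Naturality rule, restricted to the self-diffeomorphisms of C (the only
   instances that constrain F_C alone): each orientation-preserving
   diffeomorphism of S^2 mapping C to itself induces a pair of permutations
   (of the starting circles, of the ending circles); syms lists such pairs. *)
Definition naturality_rule (k l : nat)
    (syms : seq (({perm 'I_k} * {perm 'I_l})%type)) (F : cmap k l) : Prop :=
  forall s, s \in syms -> forall (a : {set 'I_k}) (b : {set 'I_l}), F (s.1 @: a) (s.2 @: b) = F a b.

Definition tree_shape (n k l : nat) : Prop := k = n.+1 /\ l = 1%N.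
Definition dual_tree_shape (n k l : nat) : Prop := k = 1%N /\ l = n.+1.

Definition SSS_tree (k l : nat) : cmap k l :=
  fun a b => if (a == setT) && (b == setT) then 1 else 0.
Definition SSS_dual (k l : nat) : cmap k l :=
  fun a b => if (a == set0) && (b == set0) then 1 else 0.

(* Comparing quantum gradings, a non-zero coefficient F a b forces
   p = (l + n) - k + 2#|a| - 2#|b|.  When a <> 1 the filtration rule puts every
   ending circle into b.  For a tree this gives p = 2(#|a| - 1) <= 2n, with
   equality only for a = x_1...x_{n+1}, b = y, and p = -2#|b| < 2n when a = 1.
   For a dual tree it gives p = 0 < 2n when a = x, and p = 2n - 2#|b| when
   a = 1, with equality only for b = 1.  So p <= 2n always, and when p = 2n
   the support of F is the single pair of the Sarkar-Seed-Szabo formula; over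
   F_2 a non-zero map supported on one pair is its indicator. *)
From mathcomp Require Import all_boot all_fingroup all_algebra zify.
Set Implicit Arguments. Unset Strict Implicit. Unset Printing Implicit Defensive.
Local Open Scope ring_scope.

Lemma F2_eq1 (x : 'F_2) : x != 0 -> x = 1.
Proof. by case: x => [[|[|m]] lt_x2] //= _; apply/val_inj. Qed.

Lemma cmap_eq_indicator (k l : nat) (F : cmap k l) a0 b0 :
  nonzero_map F -> (forall a b, F a b != 0 -> a = a0 /\ b = b0) ->
  forall a b, F a b = if (a == a0) && (b == b0) then 1 else 0.
Proof.
move=> [a1 [b1 Fab1]] suppF a b.
have [Fab | /negPn/eqP Fab] := boolP (F a b != 0).
  by have [<- <-] := suppF a b Fab; rewrite !eqxx; apply: F2_eq1.
have [<- <-] := suppF a1 b1 Fab1.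
rewrite Fab; case: eqP => [ea|//]; case: eqP => [eb|//].
by rewrite -ea -eb Fab eqxx in Fab1.
Qed.

Lemma bidegree_cardE (k l n : nat) (p : int) (F : cmap k l) a b :
  has_bidegree n p F -> F a b != 0 ->
  p = (l + n)%:Z - k%:Z + (2 * #|a|)%:Z - (2 * #|b|)%:Z.
Proof. by move=> degF /degF; rewrite /grq; lia. Qed.

Lemma filtration_supportT (k l : nat) (F : cmap k l) a b :
  filtration_rule F -> F a b != 0 -> a != set0 -> b = setT.
Proof.
move=> filtF Fab /set0Pn[i ai].
by apply/setP => j; rewrite inE (filtF i j a b ai Fab).
Qed.

Section Support.

Variables (n : nat) (p : int).
Hypothesis n_gt0 : (0 < n)%N.

Lemma tree_support (F : cmap n.+1 1) a b :
  has_bidegree n p F -> filtration_rule F -> F a b != 0 ->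
  p <= (2 * n)%:Z /\ (p = (2 * n)%:Z -> a = setT /\ b = setT).
Proof.
move=> degF filtF Fab; have := bidegree_cardE degF Fab.
have := subset_leq_card (subsetT a); have := subset_leq_card (subsetT b).
rewrite !cardsT !card_ord.
have [-> | a_neq0] := eqVneq a set0; first by rewrite cards0; lia.
rewrite (filtration_supportT filtF Fab a_neq0) cardsT card_ord => _ le_a_n1 ->.
split=> [|eq_p]; first lia.
by split=> //; apply/eqP; rewrite eqEcard subsetT cardsT card_ord; lia.
Qed.

Lemma dual_tree_support (F : cmap 1 n.+1) a b :
  has_bidegree n p F -> filtration_rule F -> F a b != 0 ->
  p <= (2 * n)%:Z /\ (p = (2 * n)%:Z -> a = set0 /\ b = set0).
Proof.
move=> degF filtF Fab; have := bidegree_cardE degF Fab.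
have [-> | a_neq0] := eqVneq a set0.
  rewrite cards0 => ->; split=> [|eq_p]; first lia.
  by split=> //; apply/eqP; rewrite -cards_eq0; lia.
have := subset_leq_card (subsetT a); rewrite cardsT card_ord.
have : (0 < #|a|)%N by rewrite card_gt0.
rewrite (filtration_supportT filtF Fab a_neq0) cardsT card_ord => ? ? ->.
split=> [|eq_p]; lia.
Qed.

End Support.

Theorem lemma3p3 (n k l : nat) (p : int)
    (syms : seq (({perm 'I_k} * {perm 'I_l})%type))
    (F : cmap k l) (G : cmap l k) :
  (0 < n)%N ->
  tree_shape n k l \/ dual_tree_shape n k l ->
  nonzero_map F ->
  has_bidegree n p F ->
  naturality_rule syms F ->
  filtration_rule F ->
  duality_rule F G ->
  (p = (2 * n)%:Z ->
     (tree_shape n k l -> forall a b, F a b = SSS_tree a b) /\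
     (dual_tree_shape n k l -> forall a b, F a b = SSS_dual a b)) /\
  ((2 * n)%:Z < p -> False).
Proof.
move=> n_gt0 [[ek el]|[ek el]] nzF degF _ filtF _; subst k l;
  have [a0 [b0 Fab0]] := nzF.
- have [le_p _] := tree_support n_gt0 degF filtF Fab0.
  split=> [eq_p|]; last lia.
  split=> [_|[]]; last lia.
  apply: cmap_eq_indicator => // a b Fab.
  exact: (tree_support n_gt0 degF filtF Fab).2.
- have [le_p _] := dual_tree_support n_gt0 degF filtF Fab0.
  split=> [eq_p|]; last lia.
  split=> [[]|_]; first lia.
  apply: cmap_eq_indicator => // a b Fab.
  exact: (dual_tree_support n_gt0 degF filtF Fab).2.
Qed.
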